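(* Let $V_1,V_2$ be Orlicz functions with $V_1(x)/V_2(x)\to\infty$ as $|x|\to\infty$. Let $\widetilde R:=\sup\{m_{V_2}(\nu):\nu\in\mathscr M_1(\mathbb R),\ m_{V_1}(\nu)\le1\}$ and let $R\in[\widetilde R,\infty)$. Let $X_1^{n,V_1}$ be uniformly distributed on $\mathbb B_1^{n,V_1}$. Then for each fixed $k\in\mathbb N$, $$\lim_{\epsilon\to0}\lim_{n\to\infty}d_w\Big(P\big[(X_1^{n,V_1}(1),\dots,X_1^{n,V_1}(k))\in\cdot\,\big|\,X_1^{n,V_1}\in\mathbb B^{n,V_2}_{R+\epsilon}\big],\ \lambda^{(n,k)}_{1,V_1}\Big)=0,$$ where $d_w$ is a metric inducing weak convergence of probability measures on $\mathbb R^k$ and $\lambda^{(n,k)}_{1,V_1}$ is the distribution of the first $k$ coordinates of a random vector uniformly distributed on $\mathbb B_1^{n,V_1}$.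
   Context: An Orlicz function is a convex, symmetric function $V:\mathbb R\to[0,\infty)$ with $V(0)=0$ and $V(x)>0$ for $x\ne0$. $\mathbb B_R^{n,V}:=\{x\in\mathbb R^n:\sum_kV(x_k)\le Rn\}$. $m_V(\nu):=\int V\,d\nu$. *)

From HB Require Import structures.
From mathcomp Require Import all_boot all_order all_algebra.
From mathcomp Require Import all_classical all_reals all_analysis.
Set Implicit Arguments. Unset Strict Implicit. Unset Printing Implicit Defensive.
Import Order.TTheory GRing.Theory Num.Theory.
Import numFieldNormedType.Exports.
Local Open Scope classical_set_scope.
Local Open Scope ring_scope.

Section Defs.
Variable R : realType.

Definition orlicz (V : R -> R) : Prop :=
  (forall x, 0 <= V x) /\
  (forall x y t, 0 <= t -> t <= 1 ->
     V (t * x + (1 - t) * y) <= t * V x + (1 - t) * V y) /\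
  (forall x, V (- x) = V x) /\
  V 0 = 0 /\
  (forall x, x != 0 -> 0 < V x).

(* Points of R^n are represented as sequences of length n; coordinate i (1-based
   in the paper) is nth 0 x (i-1). *)
Definition orlicz_ball (n : nat) (V : R -> R) (r : R) : set (seq R) :=
  [set x | size x = n /\ \sum_(v <- x) V v <= r * n%:R].

(* n-dimensional Lebesgue integral, as the iterated one-dimensional Lebesgue
   integral over R^n (x = x_1 :: x_2 :: ... :: x_n). *)
Fixpoint iter_int (n : nat) (f : seq R -> \bar R) : \bar R :=
  match n with
  | 0 => f [::]
  | m.+1 => (\int[lebesgue_measure]_(t in setT) iter_int m (fun s => f (t :: s)))%E
  end.

Definition firstk (k : nat) (x : seq R) : 'rV[R]_k := \row_(i < k) nth 0 x i.

(* E[ f(X(1),...,X(k)) ] for X uniformly distributed on the set A of R^n *)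
Definition unif_expect (n k : nat) (A : set (seq R)) (f : 'rV[R]_k -> R) : R :=
  fine (iter_int n (fun x => (\1_A x * f (firstk k x))%:E)) /
  fine (iter_int n (fun x => (\1_A x)%:E)).

Definition BL1 (k : nat) : set ('rV[R]_k -> R) :=
  [set f | exists a L : R, [/\ 0 <= a, 0 <= L, a + L <= 1,
     forall x, `|f x| <= a &
     forall x y, `|f x - f y| <= L * `|x - y|]].

(* bounded-Lipschitz (Dudley) distance between the laws of the first k
   coordinates of uniform vectors on A and on B *)
Definition dBL_unif (n k : nat) (A B : set (seq R)) : \bar R :=
  ereal_sup [set (`|unif_expect n A f - unif_expect n B f|)%:E | f in @BL1 k].

Definition mV (V : R -> R) (nu : probability R R) : \bar R :=
  (\int[nu]_x (V x)%:E)%E.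

Definition Rtilde (V1 V2 : R -> R) : \bar R :=
  ereal_sup [set mV V2 nu | nu in [set nu : probability R R | (mV V1 nu <= 1)%E]].

End Defs.

From HB Require Import structures.
From mathcomp Require Import all_boot all_order all_algebra.
From mathcomp Require Import all_classical all_reals all_analysis.
From mathcomp Require Import measurable_realfun.
Import Order.TTheory GRing.Theory Num.Theory.
Import numFieldNormedType.Exports.
Local Open Scope classical_set_scope.
Local Open Scope ring_scope.

(* For R >= R~ the conditioning event is the whole ball.  If x lies in
   B_1^{n,V1}, its empirical measure nu_x = (1/n) sum_i delta_{x_i} satisfies
   m_V1(nu_x) = (1/n) sum_i V1(x_i) <= 1, hence by definition of R~,
   (1/n) sum_i V2(x_i) = m_V2(nu_x) <= R~ <= R, i.e. x lies in B_R^{n,V2}.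
   So B_1^{n,V1} is contained in B_{R+eps}^{n,V2} for every eps >= 0, the two
   conditional laws coincide and their distance is 0 for every n. *)

Section OrliczFunction.
Variables (R : realType) (V : R -> R).
Hypothesis oV : orlicz V.

Lemma orlicz_ge0 x : 0 <= V x.
Proof. by case: oV. Qed.

Lemma orlicz_nondecreasing_ge0 x y : 0 <= x -> x <= y -> V x <= V y.
Proof.
have [_ [Vconvex [_ [V0 _]]]] := oV.
move=> x0 xy; have [y0|y_neq0] := eqVneq y 0.
  by rewrite [x](_ : _ = 0) ?y0 //; apply/le_anti; rewrite x0 andbT -y0.
have y_gt0 : 0 < y by rewrite lt_neqAle eq_sym y_neq0 (le_trans x0 xy).
(* x = (x/y) y + (1 - x/y) 0 *)
have := Vconvex y 0 (x / y) (divr_ge0 x0 (ltW y_gt0)).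
rewrite ler_pdivrMr // mul1r mulr0 addr0 V0 mulr0 addr0 divfK ?gt_eqF //.
move=> /(_ xy) /le_trans; apply.
by rewrite ler_piMl ?orlicz_ge0 // ler_pdivrMr // mul1r.
Qed.

Lemma orlicz_measurable : measurable_fun [set: R] V.
Proof.
have [_ [_ [Vsym _]]] := oV.
have -> : V = (fun y => V (Num.max y 0)) \o Num.norm.
  apply/funext => x /=; rewrite max_l //.
  by case: (ler0P x) => _ //; rewrite Vsym.
apply: measurableT_comp => //; apply: nondecreasing_measurable => // a b ab.
apply: orlicz_nondecreasing_ge0; first by rewrite le_max lexx orbT.
by rewrite ge_max !le_max ab lexx !orbT.
Qed.

End OrliczFunction.

Section EmpiricalMeasure.
Variables (R : realType) (x : seq R).

Let point_masses := msum (fun i => @dirac _ R (nth 0 x i) R) (size x).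

(* For the empty sequence the normalization falls back to delta_0. *)
Definition empirical : probability R R := mnormalize point_masses (@dirac _ R 0 R).

Hypothesis size_gt0 : (0 < size x)%N.

Lemma empiricalE :
  (empirical : set R -> \bar R) = mscale ((size x)%:R^-1)%:nng point_masses.
Proof.
have total_mass : point_masses setT = (size x)%:R%:E.
  rewrite /point_masses /msum /=; under eq_bigr do rewrite diracT.
  by rewrite sumEFin big_const_ord iter_addr addr0.
apply/funext => A; rewrite /empirical /=; unfold mnormalize => /=.
by rewrite -/point_masses total_mass eqe pnatr_eq0 gtn_eqF //= muleC.
Qed.

Lemma integral_empirical (f : R -> R) :
  measurable_fun [set: R] f -> (forall t, 0 <= f t) ->
  (\int[empirical]_t (f t)%:E = ((size x)%:R^-1 * \sum_(v <- x) f v)%:E)%E.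
Proof.
move=> mf f_ge0; have mEf : measurable_fun [set: R] (EFin \o f).
  exact/measurable_EFinP.
have Ef_ge0 t : (0 <= (f t)%:E)%E by rewrite lee_fin.
rewrite empiricalE ge0_integral_mscale // ge0_integral_measure_sum //.
under eq_bigr do rewrite (integral_dirac _ measurableT mEf) diracT mul1e.
by rewrite sumEFin -EFinM (big_nth 0) big_mkord.
Qed.

Lemma mV_empirical (V : R -> R) : orlicz V ->
  mV V empirical = ((size x)%:R^-1 * \sum_(v <- x) V v)%:E.
Proof.
by move=> oV; apply: integral_empirical; [exact: orlicz_measurable|exact: orlicz_ge0].
Qed.

End EmpiricalMeasure.
Arguments empirical {R}.

Lemma orlicz_ball_subset (R : realType) (V1 V2 : R -> R) (r : R) (n : nat) :
  orlicz V1 -> orlicz V2 -> (Rtilde V1 V2 <= r%:E)%E ->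
  orlicz_ball n V1 1 `<=` orlicz_ball n V2 r.
Proof.
move=> oV1 oV2 Rtilde_le x [<- V1x_le]; split => //.
have [/size0nil ->|size_gt0] := posnP (size x); first by rewrite big_nil mulr0.
have n_gt0 : 0 < (size x)%:R :> R by rewrite ltr0n.
have : (mV V2 (empirical x) <= Rtilde V1 V2)%E.
  apply: ereal_sup_ubound; exists (empirical x) => //=.
  by rewrite mV_empirical // lee_fin ler_pdivrMl // mulr1 -[leRHS]mul1r.
move/le_trans/(_ Rtilde_le).
by rewrite mV_empirical // lee_fin ler_pdivrMl // mulrC.
Qed.

Lemma dBL_unif_xx (R : realType) (n k : nat) (A : set (seq R)) :
  dBL_unif n k A A = 0%E.
Proof.
rewrite /dBL_unif -[RHS]ereal_sup1; congr ereal_sup.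
apply/seteqP; split => [_ [f _ <-]|_ ->]; first by rewrite subrr normr0.
exists (fun _ => 0); last by rewrite subrr normr0.
by exists 0, 0; split; rewrite ?addr0 ?ler01 // => *; rewrite ?subrr normr0 ?mul0r.
Qed.

Theorem mainTheorem8 (R : realType) (V1 V2 : R -> R) (r : R) (k : nat) :
  orlicz V1 -> orlicz V2 ->
  (forall M : R, exists A : R, forall x : R, A < `|x| -> M < V1 x / V2 x) ->
  (Rtilde V1 V2 <= r%:E)%E ->
  exists L : R -> \bar R,
    (\forall eps \near 0^'+,
        (fun n : nat => dBL_unif n k
            (orlicz_ball n V1 1 `&` orlicz_ball n V2 (r + eps))
            (orlicz_ball n V1 1)) @ \oo --> L eps) /\
    (L eps @[eps --> 0^'+] --> 0%E).
Proof.
move=> oV1 oV2 _ Rtilde_le; exists (fun _ => 0%E); split; last exact: cvg_cst.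
near=> eps; have eps_gt0 : 0 < eps by near: eps; exact: nbhs_right_gt.
have Rtilde_le_eps : (Rtilde V1 V2 <= (r + eps)%:E)%E.
  by rewrite (le_trans Rtilde_le) // lee_fin lerDl ltW.
rewrite (_ : (fun n => _) = fun _ => 0%E); first exact: cvg_cst.
apply/funext => n; rewrite setIidl ?dBL_unif_xx //.
exact: orlicz_ball_subset.
Unshelve. all: by end_near.
Qed.
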